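(* Let $\mathcal{X}=\bigsqcup_{j=1}^m\mathcal{X}_j$ be a finite set partitioned into disjoint nonempty blocks and let $T$ be a block-invariant row-stochastic matrix on $\mathcal{X}$ (i.e. $\sum_{y\in\mathcal{X}_j}T(x,y)=1$ for all $x\in\mathcal{X}_j$, all $j$). Fix $p_0\in\mathcal{P}(\mathcal{X})$, define $p_{n+1}=p_nT$ for $n\ge 0$, and let $$V(p):=\inf_{\pi\in\Pi(p_0)}D_{\mathrm{KL}}(p\|\pi),\qquad \Pi(p_0):=\Bigl\{\textstyle\sum_{j=1}^m w_j(p_0)\,\pi_j:\ \pi_j\in\mathcal{I}_j\Bigr\}.$$ Then (i) $V(p_{n+1})\le V(p_n)$ for all $n\ge 0$. (ii) If in addition each block kernel $T_j$ is primitive (irreducible and aperiodic) with unique invariant distribution $\pi_j^\ast\in\mathcal{I}_j$, then for all $n\ge0$ $$V(p_n)=\sum_{j:\,w_j(p_0)>0} w_j(p_0)\,D_{\mathrm{KL}}\bigl(p_n^{(j)}\|\pi_j^\ast\bigr),$$ and $V(p_n)\to 0$ as $n\to\infty$.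
   Context: $\mathcal{P}(\mathcal{Y})$ is the set of probability distributions (row vectors) on a finite set $\mathcal{Y}$; a row-stochastic $T$ acts by $(pT)(y)=\sum_x p(x)T(x,y)$. $T_j$ denotes the restriction of $T$ to $\mathcal{X}_j\times\mathcal{X}_j$ (row-stochastic by block invariance), and $\mathcal{I}_j:=\{\pi\in\mathcal{P}(\mathcal{X}_j):\pi T_j=\pi\}$ is its set of invariant distributions; elements of $\mathcal{P}(\mathcal{X}_j)$ are extended by zero to $\mathcal{X}$. Block masses: $w_j(p)=\sum_{x\in\mathcal{X}_j}p(x)$; when $w_j(p)>0$, $p^{(j)}(x)=p(x)/w_j(p)$ for $x\in\mathcal{X}_j$. $D_{\mathrm{KL}}(p\|q)=\sum_x p(x)\log\frac{p(x)}{q(x)}$ with $0\log(0/q)=0$ and $p\log(p/0)=+\infty$ for $p>0$. *)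

From HB Require Import structures.
From mathcomp Require Import all_boot all_order all_algebra.
From mathcomp Require Import all_classical all_reals all_analysis.
Set Implicit Arguments. Unset Strict Implicit. Unset Printing Implicit Defensive.
Import Order.TTheory GRing.Theory Num.Theory.
Local Open Scope ring_scope.

Section Defs.
Variables (R : realType) (X : finType) (m : nat) (blk : X -> 'I_m).

Definition is_dist (p : X -> R) : Prop :=
  (forall x, 0 <= p x) /\ \sum_(x : X) p x = 1.

Definition wt (j : 'I_m) (p : X -> R) : R := \sum_(x | blk x == j) p x.

(* normalized restriction p^(j), extended by zero; only used when w_j(p) > 0 *)
Definition cond (j : 'I_m) (p : X -> R) : X -> R :=
  fun x => if blk x == j then p x / wt j p else 0.

Definition push (T : X -> X -> R) (p : X -> R) : X -> R :=
  fun y => \sum_(x : X) p x * T x y.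

Fixpoint bpow (T : X -> X -> R) (j : 'I_m) (n : nat) : X -> X -> R :=
  match n with
  | 0 => fun x y => if x == y then 1 else 0
  | n'.+1 => fun x y => \sum_(z | blk z == j) bpow T j n' x z * T z y
  end.

Definition primitive_block (T : X -> X -> R) (j : 'I_m) : Prop :=
  exists k : nat, forall x y, blk x == j -> blk y == j -> 0 < bpow T j k x y.

Definition inv_block (T : X -> X -> R) (j : 'I_m) (pi : X -> R) : Prop :=
  is_dist pi /\ (forall x, blk x != j -> pi x = 0) /\
  (forall y, blk y == j -> \sum_(x | blk x == j) pi x * T x y = pi y).

Definition KL (p q : X -> R) : \bar R :=
  (\sum_(x : X)
     (if p x == 0%R then 0%E
      else if q x == 0%R then +oo%E
      else (p x * ln (p x / q x))%:E))%E.

Definition PiSet (T : X -> X -> R) (p0 : X -> R) : set (X -> R) :=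
  [set pi | exists pis : 'I_m -> X -> R,
     (forall j, inv_block T j (pis j)) /\
     pi = (fun x => \sum_(j < m) wt j p0 * pis j x)].

Definition Vfun (T : X -> X -> R) (p0 p : X -> R) : \bar R :=
  ereal_inf [set KL p pi | pi in PiSet T p0].

End Defs.

From HB Require Import structures.
From mathcomp Require Import all_boot all_order all_algebra.
From mathcomp Require Import all_classical all_reals all_analysis.
From mathcomp Require Import ring lra.
Import Order.TTheory GRing.Theory Num.Theory.
Local Open Scope classical_set_scope.
Local Open Scope ring_scope.
Set Implicit Arguments. Unset Strict Implicit. Unset Printing Implicit Defensive.

(* Every element of Pi(p0) is T-invariant, so (i) is the data-processing
   inequality KL(pT || piT) <= KL(p || pi), which follows from the log-sum
   inequality.  Under primitivity, Pi(p0) is the single mixture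
   pimix = sum_j w_j(p0) pi*_j, and since T preserves block masses,
   KL(p_n || pimix) splits into the weighted blockwise divergences.  For the
   limit, a power T_j^k whose entries are all at least d contracts the l1 norm
   of vectors of zero mass on X_j by the factor 1 - d |X_j| (Doeblin), so p_n
   tends to pimix geometrically in l1; finally
   KL(p_n || pimix) <= chi^2(p_n || pimix) <= |p_n - pimix|_1^2 / min pimix,
   the minimum being taken over the support of pimix. *)

Section KLTerm.
Variable R : realType.

Definition kl_term (a b : R) : R := if a == 0 then 0 else a * ln (a / b).

Lemma ln_le_subr1 (t : R) : 0 < t -> ln t <= t - 1.
Proof. by move=> t0; have := @le_ln1Dx R (t - 1); rewrite [1 + _]addrC subrK; apply; lra. Qed.

Lemma kl_term_ge_affine a b c : 0 <= a -> 0 <= b -> (a != 0 -> b != 0) -> 0 < c ->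
  a * ln c + a - b * c <= kl_term a b.
Proof.
move=> a0 b0 ab c0; rewrite /kl_term; case: eqP => [->|/eqP an0].
  by rewrite mul0r add0r sub0r oppr_le0 mulr_ge0 // ltW.
have apos : 0 < a by rewrite lt_def an0.
have bpos : 0 < b by rewrite lt_def ab.
pose t := b * c / a.
have tpos : 0 < t by rewrite !(mulr_gt0, invr_gt0).
have -> : a / b = c / t by rewrite /t; field; rewrite ?gt_eqF.
rewrite ln_div ?posrE // mulrBr.
have : a * ln t <= a * (t - 1) by rewrite ler_pM2l // ln_le_subr1.
have -> : a * (t - 1) = b * c - a by rewrite /t; field; rewrite gt_eqF.
lra.
Qed.

Lemma kl_termZ a b t : 0 <= t -> kl_term (a * t) (b * t) = t * kl_term a b.
Proof.
move=> t0; rewrite /kl_term mulf_eq0; have [_|an0] /= := eqVneq a 0; first by rewrite mulr0.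
have [->|tn0] /= := eqVneq t 0; first by rewrite mul0r.
by rewrite invfM mulrACA divff // mulr1 mulrAC mulrC.
Qed.

(* With c := (sum a) / (sum b) the affine lower bound sums to the left side. *)
Lemma log_sum_inequality (I : finType) (a b : I -> R) :
  (forall i, 0 <= a i) -> (forall i, 0 <= b i) -> (forall i, a i != 0 -> b i != 0) ->
  kl_term (\sum_i a i) (\sum_i b i) <= \sum_i kl_term (a i) (b i).
Proof.
move=> a0 b0 ab; case: (boolP [exists i, a i != 0]) => [/existsP[i ai]|]; last first.
  rewrite negb_exists => /forallP az.
  have a0E i : a i = 0 by apply/eqP; rewrite -[_ == _]negbK az.
  by rewrite /kl_term big1 ?eqxx // big1 // => i _; rewrite a0E eqxx.
set A := \sum_i a i; set B := \sum_i b i.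
have Apos : 0 < A by rewrite /A (bigD1 i) //= ltr_pwDl ?sumr_ge0 // lt_def ai a0.
have Bpos : 0 < B by rewrite /B (bigD1 i) //= ltr_pwDl ?sumr_ge0 // lt_def ab // b0.
have cpos : 0 < A / B by rewrite divr_gt0.
apply: le_trans (ler_sum _ (fun i _ => kl_term_ge_affine (a0 i) (b0 i) (@ab i) cpos)).
rewrite sumrB big_split /= -!mulr_suml -/A -/B [B * _]mulrC divfK ?gt_eqF //.
by rewrite /kl_term gt_eqF //; lra.
Qed.

Lemma kl_term_le_chi2 a b : 0 <= a -> 0 < b -> kl_term a b <= (a - b) ^+ 2 / b + (a - b).
Proof.
move=> a0 bpos; rewrite /kl_term; have [->|an0] := eqVneq a 0.
  by rewrite sub0r sqrrN expr2 mulrK ?unitfE ?gt_eqF // addrN.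
have apos : 0 < a by rewrite lt_def an0.
have -> : (a - b) ^+ 2 / b + (a - b) = a * (a / b - 1) by field; rewrite gt_eqF.
by rewrite ler_pM2l // ln_le_subr1 // divr_gt0.
Qed.

End KLTerm.

Section KLFinite.
Variables (R : realType) (X : finType).
Implicit Types p q : X -> R.

Lemma KL_fin p q : (forall x, p x != 0 -> q x != 0) ->
  KL p q = (\sum_x kl_term (p x) (q x))%:E.
Proof.
move=> pq; rewrite /KL -sumEFin; apply: eq_bigr => x _; rewrite /kl_term.
by case: eqP => // /eqP /pq /negbTE ->.
Qed.

Lemma KL_pinfty p q x : p x != 0 -> q x = 0 -> KL p q = +oo%E.
Proof.
move=> px qx; rewrite /KL (bigD1 x) //= (negbTE px) qx eqxx; apply: addye.
set rest := (X in X != _).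
have : ((\sum_(y | y != x) (if (p y == 0) || (q y == 0) then 0
    else p y * ln (p y / q y)))%:E <= rest)%E.
  rewrite -sumEFin; apply: lee_sum => y _.
  by case: (p y == 0) => //=; case: (q y == 0) => //=; exact: leey.
by apply: contraTneq => ->; rewrite leeNy_eq.
Qed.

End KLFinite.

Lemma finite_pos_lbound (R : realType) (I : finType) (P : pred I) (f : I -> R) :
  (forall i, P i -> 0 < f i) -> exists2 d, 0 < d & forall i, P i -> d <= f i.
Proof.
move=> fP; set S := \sum_(i | P i) (f i)^-1.
have S0 : 0 <= S by apply: sumr_ge0 => i Pi; rewrite invr_ge0 ltW ?fP.
exists (1 + S)^-1; first by rewrite invr_gt0; lra.
move=> i Pi; have fi := fP i Pi.
have fiS : (f i)^-1 <= S.
  by rewrite /S (bigD1 i) //= lerDl sumr_ge0 // => j /andP[Pj _]; rewrite invr_ge0 ltW ?fP.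
by rewrite invf_ple ?posrE //; lra.
Qed.

Lemma contraction_cvg0 (R : realType) (a : nat -> R) (k : nat) (r : R) :
  (forall n, 0 <= a n) -> (forall n, a n.+1 <= a n) -> 0 <= r -> r < 1 ->
  (forall n, a (n + k)%N <= r * a n) -> a @ \oo --> 0.
Proof.
move=> a0 adecr r0 r1 ak.
have a_antitone n n' : (n <= n')%N -> a n' <= a n.
  move=> /subnK <-; elim: (n' - n)%N => [|t IH]; first by rewrite add0n.
  by rewrite addSn; exact: le_trans (adecr _) IH.
have geo t : a (k * t)%N <= r ^+ t * a 0%N.
  elim: t => [|t IH]; first by rewrite muln0 expr0 mul1r.
  rewrite mulnS addnC exprS -mulrA; apply: le_trans (ak _) _; exact: ler_wpM2l.
have : (fun t => r ^+ t * a 0%N) @ \oo --> 0.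
  by rewrite -(mul0r (a 0%N)); apply: cvgMr_tmp; apply: cvg_expr; rewrite ger0_norm.
move=> /cvgrPdist_lt geo0; apply/cvgrPdist_lt => e e0.
have [N _ geoN] := geo0 e e0; exists (k * N)%N => // n kN_le_n.
rewrite sub0r normrN ger0_norm //.
have := geoN N (leqnn N); rewrite sub0r normrN ger0_norm ?mulr_ge0 ?exprn_ge0 // => geoN_lt.
exact: le_lt_trans (a_antitone _ _ kN_le_n) (le_lt_trans (geo N) geoN_lt).
Qed.

Section BlockKernel.
Variables (R : realType) (X : finType) (m : nat) (blk : X -> 'I_m) (T : X -> X -> R).
Hypothesis T_ge0 : forall x y, 0 <= T x y.
Hypothesis T_row1 : forall x, \sum_y T x y = 1.
Hypothesis T_block_row1 : forall x, \sum_(y | blk y == blk x) T x y = 1.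
Implicit Types p q v : X -> R.

Lemma T_off_block x y : blk y != blk x -> T x y = 0.
Proof.
have := T_row1 x; rewrite (bigID (fun y => blk y == blk x)) /= T_block_row1.
move=> /(congr1 (fun t => t - 1)); rewrite addrC addrK subrr => off0 yx.
exact: (psumr_eq0P (fun z _ => T_ge0 x z) off0).
Qed.

Lemma push_blockE p y : push T p y = \sum_(x | blk x == blk y) p x * T x y.
Proof.
rewrite /push (bigID (fun x => blk x == blk y)) /= [X in _ + X]big1 ?addr0 // => x xy.
by rewrite T_off_block ?mulr0 // eq_sym.
Qed.

Lemma sum_push p : \sum_y push T p y = \sum_x p x.
Proof. by rewrite /push exchange_big; apply: eq_bigr => x _; rewrite -mulr_sumr T_row1 mulr1. Qed.

Lemma push_ge0 p : (forall x, 0 <= p x) -> forall y, 0 <= push T p y.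
Proof. by move=> p0 y; apply: sumr_ge0 => x _; exact: mulr_ge0. Qed.

Lemma pushB p q : push T (fun x => p x - q x) = (fun y => push T p y - push T q y).
Proof. by apply/funext => y; rewrite /push -sumrB; apply: eq_bigr => x _; rewrite mulrBl. Qed.

Lemma wt_push j p : wt blk j (push T p) = wt blk j p.
Proof.
rewrite /wt /push exchange_big /= [RHS]big_mkcond; apply: eq_bigr => x _.
rewrite -mulr_sumr; have [<-|xj] := eqVneq (blk x) j; first by rewrite T_block_row1 mulr1.
by rewrite big1 ?mulr0 // => y /eqP yj; apply: T_off_block; rewrite yj eq_sym.
Qed.

Lemma push_inv_block j pi : inv_block blk T j pi -> push T pi = pi.
Proof.
case=> _ [off inv]; apply/funext => y; have [yj|yj] := eqVneq (blk y) j.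
  by rewrite push_blockE yj inv // yj.
rewrite off // /push big1 // => x _; have [xj|xj] := eqVneq (blk x) j.
  by rewrite T_off_block ?mulr0 // xj.
by rewrite off ?mul0r.
Qed.

Lemma push_support p q y : (forall x, 0 <= q x) -> (forall x, p x != 0 -> q x != 0) ->
  push T p y != 0 -> push T q y != 0.
Proof.
move=> q0 pq; apply: contra_neq; rewrite /push.
move=> /(psumr_eq0P (fun x _ => mulr_ge0 (q0 x) (T_ge0 x y))) qT0.
apply: big1 => x _; move: (qT0 x isT) => /eqP; rewrite mulf_eq0 => /orP[/eqP qx|/eqP->].
  by have [->|/pq] := eqVneq (p x) 0; [rewrite mul0r | rewrite qx eqxx].
by rewrite mulr0.
Qed.

Lemma KL_push_le p q : (forall x, 0 <= p x) -> (forall x, 0 <= q x) ->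
  (KL (push T p) (push T q) <= KL p q)%E.
Proof.
move=> p0 q0; case: (boolP [exists x, (p x != 0) && (q x == 0)]).
  by move=> /existsP[x /andP[px /eqP qx]]; rewrite (KL_pinfty px qx) leey.
rewrite negb_exists => /forallP pq_supp.
have pq x : p x != 0 -> q x != 0 by move=> px; have := pq_supp x; rewrite px.
rewrite !KL_fin //; last by move=> y; apply: push_support.
rewrite lee_fin; apply: le_trans (_ : \sum_y \sum_x kl_term (p x * T x y) (q x * T x y) <= _).
  apply: ler_sum => y _; apply: log_sum_inequality => x; rewrite ?mulr_ge0 //.
  by rewrite !mulf_eq0 !negb_or => /andP[/pq -> ->].
rewrite (eq_bigr (fun y => \sum_x T x y * kl_term (p x) (q x))); last first.
  by move=> y _; apply: eq_bigr => x _; rewrite kl_termZ.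
by rewrite exchange_big; apply: ler_sum => x _; rewrite -mulr_suml T_row1 mul1r.
Qed.

Lemma bpow_ge0 j k x y : 0 <= bpow blk T j k x y.
Proof.
elim: k x y => [|k IH] x y /=; first by case: (x == y).
by apply: sumr_ge0 => z _; exact: mulr_ge0.
Qed.

Lemma bpow_row1 j k x : blk x == j -> \sum_(y | blk y == j) bpow blk T j k x y = 1.
Proof.
move=> xj; elim: k => [|k IH] /=.
  by rewrite (bigD1 x) //= eqxx big1 ?addr0 // => y /andP[_ /negbTE]; rewrite eq_sym => ->.
rewrite exchange_big /= -[RHS]IH; apply: eq_bigr => z /eqP zj.
by rewrite -mulr_sumr -zj T_block_row1 mulr1.
Qed.

Lemma iter_push_bpow j k v y : blk y == j ->
  iter k (push T) v y = \sum_(x | blk x == j) v x * bpow blk T j k x y.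
Proof.
elim: k y => [|k IH] y yj /=.
  rewrite (bigD1 y) //= eqxx mulr1 big1 ?addr0 // => x /andP[_ /negbTE ->].
  by rewrite mulr0.
rewrite push_blockE (eqP yj) (eq_bigr _ (fun z zj => congr1 (fun a => a * T z y) (IH z zj))).
under eq_bigr do rewrite mulr_suml.
rewrite exchange_big /=; apply: eq_bigr => x _; rewrite mulr_sumr.
by apply: eq_bigr => z _; rewrite mulrA.
Qed.

Definition block_norm1 j v := \sum_(x | blk x == j) `|v x|.

Lemma block_norm1_push_le j v : block_norm1 j (push T v) <= block_norm1 j v.
Proof.
apply: le_trans (_ : \sum_(y | blk y == j) \sum_(x | blk x == j) `|v x| * T x y <= _).
  apply: ler_sum => y /eqP yj; rewrite push_blockE yj.
  apply: le_trans (ler_norm_sum _ _ _) _.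
  by apply: ler_sum => x _; rewrite normrM (ger0_norm (T_ge0 x y)).
rewrite exchange_big /=; apply: ler_sum => x /eqP xj.
by rewrite -mulr_sumr -xj T_block_row1 mulr1.
Qed.

(* Doeblin: if every entry of T_j^k is at least d, then T_j^k - d 1 1^T is
   still nonnegative with row sums 1 - d |X_j|, and it acts as T_j^k on
   vectors of total mass 0. *)
Lemma block_doeblin j : primitive_block blk T j -> (exists x, blk x = j) ->
  exists k r, [/\ 0 <= r, r < 1 & forall v, \sum_(x | blk x == j) v x = 0 ->
    block_norm1 j (iter k (push T) v) <= r * block_norm1 j v].
Proof.
move=> [k Tk_pos] [x0 /eqP x0j].
have [d d0 Tk_ge] := @finite_pos_lbound R (X * X)%type
  (fun xy => (blk xy.1 == j) && (blk xy.2 == j)) (fun xy => bpow blk T j k xy.1 xy.2)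
  (fun xy xyj => Tk_pos _ _ (andP xyj).1 (andP xyj).2).
have Tk_ge_d x y : blk x == j -> blk y == j -> d <= bpow blk T j k x y.
  by move=> xj yj; apply: (Tk_ge (x, y)); rewrite /= xj yj.
set c := \sum_(y | blk y == j) d.
have c0 : 0 < c.
  rewrite /c (bigD1 x0 x0j) /= ltr_pwDl //; apply: sumr_ge0 => *; exact: ltW.
have c1 : c <= 1.
  by rewrite -(bpow_row1 k x0j); apply: ler_sum => y yj; apply: Tk_ge_d.
exists k, (1 - c); split; [lra | lra | move=> v v0].
have Tk_shift y : blk y == j ->
    iter k (push T) v y = \sum_(x | blk x == j) v x * (bpow blk T j k x y - d).
  move=> yj; rewrite (iter_push_bpow _ _ yj).
  under [RHS]eq_bigr do rewrite mulrBr.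
  by rewrite sumrB -mulr_suml v0 mul0r subr0.
apply: le_trans (_ : \sum_(y | blk y == j) \sum_(x | blk x == j)
    `|v x| * (bpow blk T j k x y - d) <= _).
  apply: ler_sum => y yj; rewrite Tk_shift //; apply: le_trans (ler_norm_sum _ _ _) _.
  by apply: ler_sum => x xj; rewrite normrM (ger0_norm (x := _ - d)) // subr_ge0 Tk_ge_d.
rewrite exchange_big /= /block_norm1 mulr_sumr; apply: ler_sum => x xj.
by rewrite -mulr_sumr sumrB bpow_row1 // -/c mulrC.
Qed.

Lemma iter_push_ge0 p n : (forall x, 0 <= p x) -> forall x, 0 <= iter n (push T) p x.
Proof. by move=> p0; elim: n => //= n IH; exact: push_ge0. Qed.

Lemma wt_iter_push j n p : wt blk j (iter n (push T) p) = wt blk j p.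
Proof. by elim: n => //= n IH; rewrite wt_push. Qed.

Lemma sum_iter_push n p : \sum_x iter n (push T) p x = \sum_x p x.
Proof. by elim: n => //= n IH; rewrite sum_push. Qed.

Lemma sum_partition_blk (f : X -> R) : \sum_x f x = \sum_(j < m) \sum_(x | blk x == j) f x.
Proof. by rewrite (partition_big blk xpredT). Qed.

Section Mixtures.
Variable p0 : X -> R.
Hypothesis p0_ge0 : forall x, 0 <= p0 x.

Lemma PiSet_push pi : PiSet blk T p0 pi -> push T pi = pi.
Proof.
case=> pis [pis_inv ->]; apply/funext => y; rewrite /push.
under eq_bigr do rewrite mulr_suml.
rewrite exchange_big /=; apply: eq_bigr => j _.
rewrite -[in RHS](push_inv_block (pis_inv j)) /push mulr_sumr.
by apply: eq_bigr => x _; rewrite mulrA.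
Qed.

Lemma PiSet_ge0 pi : PiSet blk T p0 pi -> forall x, 0 <= pi x.
Proof.
case=> pis [pis_inv ->] x; apply: sumr_ge0 => j _.
by rewrite mulr_ge0 ?(pis_inv j).1.1 //; apply: sumr_ge0 => y _.
Qed.

Lemma Vfun_push_le p : (forall x, 0 <= p x) ->
  (Vfun blk T p0 (push T p) <= Vfun blk T p0 p)%E.
Proof.
move=> p_ge0; apply: le_ereal_inf_tmp => _ [pi Ppi <-].
apply: (@le_trans _ _ (KL (push T p) pi)); first by apply: ereal_inf_lbound; exists pi.
by rewrite -[X in KL _ X](PiSet_push Ppi) KL_push_le //; exact: PiSet_ge0.
Qed.

End Mixtures.

Section Primitive.
Variable p0 : X -> R.
Hypothesis p0_dist : is_dist p0.
Variable pistar : 'I_m -> X -> R.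
Hypothesis T_primitive : forall j, primitive_block blk T j.
Hypothesis pistar_inv : forall j, inv_block blk T j (pistar j).
Hypothesis pistar_uniq : forall j pi, inv_block blk T j pi -> pi = pistar j.

Local Notation w j := (wt blk j p0).
Local Notation pn n := (iter n (push T) p0).

Definition pimix x := \sum_(j < m) w j * pistar j x.

Lemma pn_ge0 n x : 0 <= pn n x.
Proof. by apply: iter_push_ge0; exact: p0_dist.1. Qed.

Lemma wt_ge0 j : 0 <= w j.
Proof. by apply: sumr_ge0 => x _; exact: p0_dist.1. Qed.

Lemma pistar_ge0 j x : 0 <= pistar j x.
Proof. exact: (pistar_inv j).1.1. Qed.

Lemma pistar_block_sum j : \sum_(x | blk x == j) pistar j x = 1.
Proof.
have [[_ <-] [off _]] := pistar_inv j.
by rewrite [RHS](bigID (fun x => blk x == j)) /= [X in _ = _ + X]big1 ?addr0.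
Qed.

(* A positive power T_j^k spreads any invariant mass over the whole block. *)
Lemma pistar_gt0 j x : blk x == j -> 0 < pistar j x.
Proof.
move=> xj; have [k Tk_pos] := T_primitive j.
rewrite -(iter_fix k (push_inv_block (pistar_inv j))) (iter_push_bpow _ _ xj).
have [x0 /andP[x0j pi_x0]] : exists x0, (blk x0 == j) && (pistar j x0 != 0).
  apply/existsP; apply: contraT; rewrite negb_exists => /forallP pi0.
  have := pistar_block_sum j; rewrite big1 => [/eqP|y yj]; first by rewrite eq_sym oner_eq0.
  by apply/eqP; have := pi0 y; rewrite yj negbK.
rewrite (bigD1 x0) //=; apply: lt_le_trans (_ : pistar j x0 * bpow blk T j k x0 x <= _).
  by rewrite mulr_gt0 ?Tk_pos // lt_def pi_x0 pistar_ge0.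
by rewrite lerDl; apply: sumr_ge0 => z _; rewrite mulr_ge0 ?pistar_ge0 ?bpow_ge0.
Qed.

Lemma pimixE x : pimix x = w (blk x) * pistar (blk x) x.
Proof.
rewrite /pimix (bigD1 (blk x)) //= big1 ?addr0 // => j jx.
by rewrite (pistar_inv j).2.1 ?mulr0 // eq_sym.
Qed.

Lemma pimix_ge0 x : 0 <= pimix x.
Proof. by rewrite pimixE mulr_ge0 ?wt_ge0 ?pistar_ge0. Qed.

Lemma PiSet_pimix : PiSet blk T p0 = [set pimix].
Proof.
apply/seteqP; split => [pi [pis [pis_inv ->]]|_ ->]; last by exists pistar.
by apply/funext => x; apply: eq_bigr => j _; rewrite (pistar_uniq (pis_inv j)).
Qed.

Lemma Vfun_pimix p : Vfun blk T p0 p = KL p pimix.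
Proof. by rewrite /Vfun PiSet_pimix image_set1 ereal_inf1. Qed.

Lemma pn_support n x : pn n x != 0 -> pimix x != 0.
Proof.
move=> pnx; have pnx_gt0 : 0 < pn n x by rewrite lt_def pnx pn_ge0.
have w_gt0 : 0 < w (blk x).
  by rewrite -(wt_iter_push _ n) /wt (bigD1 x) //= ltr_pwDl // sumr_ge0 // => z _; exact: pn_ge0.
by rewrite pimixE gt_eqF // mulr_gt0 // pistar_gt0.
Qed.

Lemma Vfun_blockwise n : Vfun blk T p0 (pn n) =
  (\sum_(j < m | (0 < w j)%R) (w j)%:E * KL (cond blk j (pn n)) (pistar j))%E.
Proof.
rewrite Vfun_pimix KL_fin; last exact: pn_support.
rewrite (eq_bigr (fun j => (w j * \sum_x kl_term (cond blk j (pn n) x) (pistar j x))%:E));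
  last first.
  move=> j _; rewrite KL_fin ?EFinM // => x; rewrite /cond.
  by case: (eqVneq (blk x) j) => [xj _|_]; [rewrite gt_eqF // pistar_gt0 // xj | rewrite eqxx].
rewrite sumEFin; congr _%:E; rewrite (partition_big blk xpredT) //= [RHS]big_mkcond /=.
apply: eq_bigr => j _; case: ifPn => [w_gt0|w_le0].
  rewrite mulr_sumr [RHS](bigID (fun x => blk x == j)) /= [X in _ = _ + X]big1 ?addr0.
    apply: eq_bigr => x /eqP xj; rewrite pimixE /cond xj eqxx wt_iter_push.
    by rewrite -kl_termZ ?ltW // divfK ?gt_eqF // [w j * _]mulrC.
  by move=> x /negbTE xj; rewrite /cond xj /kl_term eqxx mulr0.
have w0 : wt blk j (pn n) = 0.
  by rewrite wt_iter_push; apply/eqP; rewrite eq_le wt_ge0 andbT leNgt.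
apply: big1 => x xj.
by rewrite (psumr_eq0P (fun x _ => pn_ge0 n x) w0 xj) /kl_term eqxx.
Qed.

Lemma push_pimix : push T pimix = pimix.
Proof. by apply: (PiSet_push (p0 := p0)); rewrite PiSet_pimix. Qed.

Lemma pimix_block_sum j : \sum_(x | blk x == j) pimix x = w j.
Proof.
rewrite (eq_bigr (fun x => w j * pistar j x)) => [|x /eqP xj]; last by rewrite pimixE xj.
by rewrite -mulr_sumr pistar_block_sum mulr1.
Qed.

Lemma sum_pimix : \sum_x pimix x = 1.
Proof.
rewrite sum_partition_blk (eq_bigr _ (fun j _ => pimix_block_sum j)).
by rewrite -p0_dist.2 [RHS]sum_partition_blk.
Qed.

Lemma iter_push_sub_pimix n k :
  (fun x => pn (n + k) x - pimix x) = iter k (push T) (fun x => pn n x - pimix x).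
Proof.
elim: k => [|k IH]; first by rewrite addn0.
by rewrite addnS /= -IH pushB push_pimix.
Qed.

Hypothesis blocks_nonempty : forall j, exists x, blk x = j.

Lemma block_norm1_cvg0 j : (fun n => block_norm1 j (fun x => pn n x - pimix x)) @ \oo --> 0.
Proof.
have [k [r [r0 r1 contract]]] := block_doeblin (T_primitive j) (blocks_nonempty j).
apply: (@contraction_cvg0 _ _ k r) => // n.
- exact: sumr_ge0.
- by have := block_norm1_push_le j (fun x => pn n x - pimix x); rewrite pushB push_pimix.
- rewrite iter_push_sub_pimix; apply: contract.
  by rewrite sumrB pimix_block_sum -(wt_iter_push j n) subrr.
Qed.

Lemma norm1_cvg0 : (fun n => \sum_x `|pn n x - pimix x|) @ \oo --> 0.
Proof.
rewrite (_ : (fun n => _) = fun n => \sum_(j < m) block_norm1 j (fun x => pn n x - pimix x)).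
  have := @cvg_big _ 'I_m +%R 0 xpredT add_continuous _ _ (index_enum 'I_m) _ (fun _ => 0) _
    (fun j _ => block_norm1_cvg0 j).
  by rewrite big1_eq; apply.
by apply/funext => n; rewrite sum_partition_blk.
Qed.

Lemma KL_pimix_ge0 n : 0 <= \sum_x kl_term (pn n x) (pimix x).
Proof.
apply: le_trans (log_sum_inequality (pn_ge0 n) pimix_ge0 (@pn_support n)).
by rewrite sum_iter_push p0_dist.2 sum_pimix /kl_term oner_eq0 divr1 ln1 mulr0.
Qed.

Lemma KL_pimix_le_norm1 : exists2 d, 0 < d & forall n,
  \sum_x kl_term (pn n x) (pimix x) <= d^-1 * (\sum_x `|pn n x - pimix x|) ^+ 2.
Proof.
have pi_gt0 x : pimix x != 0 -> 0 < pimix x by rewrite lt_def pimix_ge0 andbT.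
have [d d0 d_le] := finite_pos_lbound pi_gt0.
exists d => // n; set A := \sum_x `|pn n x - pimix x|.
have norm_le_A x : `|pn n x - pimix x| <= A by rewrite /A (bigD1 x) //= lerDl sumr_ge0.
have kl_le x : kl_term (pn n x) (pimix x) <=
    d^-1 * (`|pn n x - pimix x| * A) + (pn n x - pimix x).
  have [pi0|/pi_gt0 pix_gt0] := eqVneq (pimix x) 0.
    have pn0 : pn n x = 0 by apply/eqP; apply: contraTT (@pn_support n x) _; rewrite pi0.
    by rewrite pn0 pi0 /kl_term eqxx subrr normr0 mul0r mulr0 addr0.
  apply: le_trans (kl_term_le_chi2 (pn_ge0 n x) pix_gt0) _.
  rewrite lerD2r [d^-1 * _]mulrC -real_normK ?num_real // expr2.
  apply: ler_pM; rewrite ?mulr_ge0 ?invr_ge0 ?pimix_ge0 //; first exact: ler_wpM2l.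
  by rewrite lef_pV2 ?posrE // d_le // gt_eqF.
apply: le_trans (ler_sum _ (fun x _ => kl_le x)) _.
rewrite big_split /= sumrB sum_iter_push p0_dist.2 sum_pimix subrr addr0.
by rewrite -mulr_sumr -mulr_suml expr2.
Qed.

Lemma KL_pimix_cvg0 : (fun n => \sum_x kl_term (pn n x) (pimix x)) @ \oo --> 0.
Proof.
have [d d0 KL_le] := KL_pimix_le_norm1.
apply: (@squeeze_cvgr _ _ _ _ (cst 0)
  (fun n => d^-1 * (\sum_x `|pn n x - pimix x|) ^+ 2)); last 2 first.
- exact: (@cvg_cst R^o).
- under eq_fun do rewrite expr2.
  by have := cvgMl_tmp (a := d^-1) (cvgM norm1_cvg0 norm1_cvg0); rewrite !mulr0; apply.
- by near=> n; rewrite KL_pimix_ge0 KL_le.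
Unshelve. all: end_near.
Qed.

Lemma Vfun_cvg0 : (fun n => Vfun blk T p0 (pn n)) @ \oo --> 0%E.
Proof.
have VE n : Vfun blk T p0 (pn n) = (\sum_x kl_term (pn n x) (pimix x))%:E.
  by rewrite Vfun_pimix KL_fin //; exact: pn_support.
rewrite (funext VE); apply: cvg_EFin; first by near=> n.
exact: KL_pimix_cvg0.
Unshelve. all: end_near.
Qed.

End Primitive.

End BlockKernel.

Theorem theorem1 (R : realType) (X : finType) (m : nat) (blk : X -> 'I_m)
  (T : X -> X -> R) (p0 : X -> R) :
  (forall j : 'I_m, exists x : X, blk x = j) ->
  (forall x y, 0 <= T x y) ->
  (forall x, \sum_(y : X) T x y = 1) ->
  (forall x, \sum_(y | blk y == blk x) T x y = 1) ->
  is_dist p0 ->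
  let pn := fun n : nat => iter n (push T) p0 in
  (forall n : nat, (Vfun blk T p0 (pn n.+1) <= Vfun blk T p0 (pn n))%E) /\
  (forall pistar : 'I_m -> X -> R,
     (forall j, primitive_block blk T j) ->
     (forall j, inv_block blk T j (pistar j)) ->
     (forall j pi, inv_block blk T j pi -> pi = pistar j) ->
     (forall n : nat,
        Vfun blk T p0 (pn n) =
        (\sum_(j < m | (0 < wt blk j p0)%R)
            (wt blk j p0)%:E * KL (cond blk j (pn n)) (pistar j))%E) /\
     ((fun n => Vfun blk T p0 (pn n)) @ \oo --> (0 : \bar R))).
Proof.
move=> blocks_nonempty T_ge0 T_row1 T_block_row1 [p0_ge0 p0_sum1] pn; split.
  by move=> n; apply: Vfun_push_le => //; exact: iter_push_ge0.
move=> pistar prim inv uniq; split; first exact: Vfun_blockwise.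
exact: Vfun_cvg0.
Qed.
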